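(* Let $(\mathcal X,\mathcal A)$ be a measurable space, $G$ a probability measure on it, $q>2$, and $\mu_2,\mu_q:\mathcal X\to[0,\infty)$ measurable functions with $\mu_2$ bounded away from zero and $\mu_q$ bounded (away from infinity). For each $n$ let $K_n:\mathcal X\times\mathcal X\to\mathbb R$ be measurable, let $k_n=\iint K_n^2(x,y)\mu_2(x)\mu_2(y)\,d(G\times G)(x,y)$, and assume $\sup_{x,y}|K_n(x,y)|\le Ck_n$ for a constant $C$ independent of $n$. Let $\mathcal X=\bigcup_m\mathcal X_{n,m}$ be finite measurable partitions. If $\max_m G(\mathcal X_{n,m})\,k_n/n\to0$, then $$\frac1{k_n^{q/2}}\max_m\Big(\frac{G(\mathcal X_{n,m})}{n}\Big)^{q/2-1}\sum_m\int_{\mathcal X_{n,m}}\int_{\mathcal X_{n,m}}|K_n(x,y)|^q\mu_q(x)\mu_q(y)\,d(G\times G)(x,y)\to0 .$$ *)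

From HB Require Import structures.
From mathcomp Require Import all_boot all_order all_algebra.
From mathcomp Require Import all_classical all_reals all_analysis.
Set Implicit Arguments. Unset Strict Implicit. Unset Printing Implicit Defensive.
Import Order.TTheory GRing.Theory Num.Theory.
Import numFieldNormedType.Exports.
Local Open Scope classical_set_scope.
Local Open Scope ring_scope.

Definition kn d (T : measurableType d) (R : realType)
  (G : probability T R) (mu2 : T -> R) (Kn : T -> T -> R) : \bar R :=
  (\int[(G \x G)%E]_(z in setT) (Kn z.1 z.2 ^+ 2 * mu2 z.1 * mu2 z.2)%:E)%E.

Definition finite_meas_partition d (T : measurableType d) (N : nat)
  (P : nat -> set T) : Prop :=
  (forall m, (m < N)%N -> measurable (P m)) /\
  (forall m m', (m < N)%N -> (m' < N)%N -> m <> m' -> P m `&` P m' = set0) /\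
  (\bigcup_(m in [set m | (m < N)%N]) P m = setT).

From HB Require Import structures.
From mathcomp Require Import all_boot all_order all_algebra.
From mathcomp Require Import all_classical all_reals all_analysis measurable_realfun.
From mathcomp Require Import ring lra.
Import Order.TTheory GRing.Theory Num.Theory.
Import numFieldNormedType.Exports.
Local Open Scope classical_set_scope.
Local Open Scope ring_scope.

(* Since [|K_n| <= |C| k_n] and [mu_q <= M <= (M/c) mu_2], the integrand satisfies
   [|K_n|^q mu_q mu_q <= (|C| k_n)^(q-2) (M/c)^2 K_n^2 mu_2 mu_2]; the blocks
   [X_{n,m} x X_{n,m}] are disjoint, so the sum over [m] is at most
   [(|C| k_n)^(q-2) (M/c)^2 k_n].  After normalisation by
   [k_n^(-q/2) (g_n/n)^(q/2-1)], with [g_n = max_m G(X_{n,m})], what remains is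
   [|C|^(q-2) (M/c)^2 (g_n k_n / n)^(q/2-1)], which tends to [0] because
   [g_n k_n / n] does and [q/2 - 1 > 0]. *)

Lemma ge0_sum_integral_disjoint_le [d] [U : measurableType d] [R : realType]
    (mu : {measure set U -> \bar R}) [N : nat] [A : nat -> set U]
    [h : U -> \bar R] :
  (forall m, (m < N)%N -> measurable (A m)) ->
  (forall m m', (m < N)%N -> (m' < N)%N -> m <> m' -> A m `&` A m' = set0) ->
  measurable_fun setT h -> (forall x, (0 <= h x)%E) ->
  (\sum_(m < N) \int[mu]_(x in A m) h x <= \int[mu]_(x in setT) h x)%E.
Proof.
move=> mA dA mh h0.
have mAi (i : 'I_N) : measurable (A i) by exact: mA.
rewrite -(ge0_integral_bigsetU mu mAi (index_enum_uniq 'I_N)); first last.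
- by move=> x _.
- exact: measurable_funS mh.
- move=> i j _ _ [x [xi xj]]; apply/val_inj/eqP/negPn/negP => /eqP ij.
  by have := dA _ _ (ltn_ord i) (ltn_ord j) ij; move/(congr1 (@^~ x)) => /= <-.
by apply: ge0_subset_integral => //; exact: bigsetU_measurable.
Qed.

Lemma powR_cvg0_seq (R : realType) (u : nat -> R) (p : R) :
  0 < p -> (forall n, 0 <= u n) -> u @ \oo --> 0 ->
  (fun n => u n `^ p) @ \oo --> 0.
Proof.
move=> p0 u0 /cvgrPdist_le hu; apply/cvgrPdist_le => e e0.
apply: filterS (hu _ (powR_gt0 p^-1 e0)) => n.
rewrite !sub0r !normrN !ger0_norm ?powR_ge0 // => une.
rewrite -[leRHS](powRr1 (ltW e0)) -(mulVf (lt0r_neq0 p0)) powRrM.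
by apply: ge0_ler_powR; rewrite ?nnegrE ?powR_ge0 ?(ltW p0).
Qed.

Lemma EFin_mul_fine_le (R : realType) (a : R) (x : \bar R) :
  0 <= a -> (0 <= x)%E -> ((a * fine x)%:E <= a%:E * x)%E.
Proof.
by move=> a0; case: x => [x| |] //= _; rewrite mulr0 mule_ge0.
Qed.

Lemma powR_le_mul_sqr (R : realType) (q a b : R) :
  2 <= q -> `|a| <= b -> `|a| `^ q <= b `^ (q - 2) * a ^+ 2.
Proof.
move=> q2 ab.
have -> : `|a| `^ q = `|a| `^ (q - 2) * `|a| `^ 2%:R.
  by rewrite -powRD subrK // (gt_eqF (_ : 0 < q)) //; lra.
rewrite powR_mulrn // real_normK ?num_real // ler_wpM2r ?sqr_ge0 //.
by apply: ge0_ler_powR; rewrite ?nnegrE ?(le_trans _ ab) //; lra.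
Qed.

Lemma le_mul_ratio (R : realFieldType) (c M m x : R) :
  0 < c -> c <= x -> 0 <= M -> m <= M -> m <= M / c * x.
Proof.
move=> c0 cx M0 mM; apply: (le_trans mM).
by rewrite mulrAC ler_pdivlMr // ler_wpM2l.
Qed.

Lemma kn_normalisation_eq (R : realType) (q k g C a : R) :
  0 < k -> 0 <= g ->
  (k `^ (q / 2))^-1 * g `^ (q / 2 - 1) * ((`|C| * k) `^ (q - 2) * a * k)
  = `|C| `^ (q - 2) * a * (g * k) `^ (q / 2 - 1).
Proof.
move=> k0 g0.
have kq : k `^ (q - 2) * k = k `^ (q / 2) * k `^ (q / 2 - 1).
  rewrite -{2}(powRr1 (ltW k0)) -!powRD ?(gt_eqF k0) ?implybT //.
  by congr (_ `^ _); field.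
rewrite !powRM ?(ltW k0) //.
transitivity ((k `^ (q / 2))^-1 * g `^ (q / 2 - 1) * `|C| `^ (q - 2) * a
   * (k `^ (q - 2) * k)); first by ring.
by rewrite kq; field; rewrite gt_eqF ?powR_gt0.
Qed.

Section FixedKernel.
Context {d : measure_display} {T : measurableType d} {R : realType}.
Context {G : probability T R} {q c M : R} {mu2 muq : T -> R}.
Hypotheses (q2 : 2 < q) (c0 : 0 < c).
Hypotheses (mmu2 : measurable_fun setT mu2) (mu20 : forall x, 0 <= mu2 x).
Hypothesis (cmu2 : forall x, c <= mu2 x).
Hypotheses (mmuq : measurable_fun setT muq) (muq0 : forall x, 0 <= muq x).
Hypothesis (muqM : forall x, muq x <= M).

Lemma q_half_gt0 : 0 < q / 2.
Proof. by have := q2; lra. Qed.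

Lemma kn_integrand_ge0 (Kn : T -> T -> R) (z : T * T) :
  0 <= Kn z.1 z.2 ^+ 2 * mu2 z.1 * mu2 z.2.
Proof. exact: mulr_ge0 (mulr_ge0 (sqr_ge0 _) (mu20 _)) (mu20 _). Qed.

Lemma kn_ge0 (Kn : T -> T -> R) : (0 <= kn G mu2 Kn)%E.
Proof. by apply: integral_ge0 => z _; rewrite lee_fin kn_integrand_ge0. Qed.

Lemma kernel_q_integrand_ge0 (Kn : T -> T -> R) (z : T * T) :
  0 <= `|Kn z.1 z.2| `^ q * muq z.1 * muq z.2.
Proof. exact: mulr_ge0 (mulr_ge0 (powR_ge0 _ _) (muq0 _)) (muq0 _). Qed.

Lemma kernel_integrand_le (Kn : T -> T -> R) (b : R) (z : T * T) :
  `|Kn z.1 z.2| <= b ->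
  `|Kn z.1 z.2| `^ q * muq z.1 * muq z.2 <=
    b `^ (q - 2) * (M / c) ^+ 2 * (Kn z.1 z.2 ^+ 2 * mu2 z.1 * mu2 z.2).
Proof.
move=> Kb.
have M0 : 0 <= M := le_trans (muq0 z.1) (muqM z.1).
have muq_le x : muq x <= M / c * mu2 x by exact: le_mul_ratio.
have -> : b `^ (q - 2) * (M / c) ^+ 2 * (Kn z.1 z.2 ^+ 2 * mu2 z.1 * mu2 z.2)
  = b `^ (q - 2) * Kn z.1 z.2 ^+ 2 * (M / c * mu2 z.1) * (M / c * mu2 z.2) by ring.
have Kq : `|Kn z.1 z.2| `^ q <= b `^ (q - 2) * Kn z.1 z.2 ^+ 2.
  by apply: powR_le_mul_sqr => //; exact: ltW.
by rewrite ler_pM ?mulr_ge0 ?powR_ge0 ?ler_pM.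
Qed.

Lemma sum_partition_integral_le [Kn : T -> T -> R] [N : nat] [P : nat -> set T]
    [k C : R] :
  measurable_fun setT (fun z : T * T => Kn z.1 z.2) ->
  finite_meas_partition N P -> kn G mu2 Kn = k%:E ->
  (forall x y, `|Kn x y| <= C * k) ->
  (\sum_(m < N) \int[(G \x G)%E]_(z in P m `*` P m)
      (`|Kn z.1 z.2| `^ q * muq z.1 * muq z.2)%:E
    <= ((`|C| * k) `^ (q - 2) * (M / c) ^+ 2 * k)%:E)%E.
Proof.
move=> mK [mP [dP _]] knk KCk.
set D := (`|C| * k) `^ (q - 2) * (M / c) ^+ 2.
have mg : measurable_fun setT
    (fun z : T * T => Kn z.1 z.2 ^+ 2 * mu2 z.1 * mu2 z.2).
  apply: measurable_funM; first apply: measurable_funM.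
  - exact: measurable_funX.
  - exact: measurableT_comp mmu2 measurable_fst.
  - exact: measurableT_comp mmu2 measurable_snd.
have mDg : measurable_fun setT
    (fun z : T * T => (D * (Kn z.1 z.2 ^+ 2 * mu2 z.1 * mu2 z.2))%:E).
  by apply/measurable_EFinP/measurable_funM.
have mf : measurable_fun setT
    (fun z : T * T => (`|Kn z.1 z.2| `^ q * muq z.1 * muq z.2)%:E).
  apply/measurable_EFinP/measurable_funM; first apply: measurable_funM.
  - exact: measurableT_comp (@measurable_powR R q)
      (measurableT_comp (@normr_measurable R setT) mK).
  - exact: measurableT_comp mmuq measurable_fst.
  - exact: measurableT_comp mmuq measurable_snd.
have mPP m : (m < N)%N -> measurable (P m `*` P m).
  by move=> mN; apply: measurableX; exact: mP.
have dPP m m' : (m < N)%N -> (m' < N)%N -> m <> m' ->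
    P m `*` P m `&` P m' `*` P m' = set0.
  by move=> mN m'N mm'; rewrite -setXI (dP _ _ mN m'N mm') set0X.
have D0 : 0 <= D by rewrite mulr_ge0 ?powR_ge0 ?sqr_ge0.
have Dg0 z : (0 <= (D * (Kn z.1 z.2 ^+ 2 * mu2 z.1 * mu2 z.2))%:E)%E.
  by rewrite lee_fin mulr_ge0 ?kn_integrand_ge0.
have k0 : 0 <= k by rewrite -lee_fin -knk kn_ge0.
apply: (@le_trans _ _ (\sum_(m < N) \int[(G \x G)%E]_(z in P m `*` P m)
    (D * (Kn z.1 z.2 ^+ 2 * mu2 z.1 * mu2 z.2))%:E)%E).
  apply: lee_sum => m _; apply: ge0_le_integral => //.
  - exact: mPP.
  - by move=> z _; rewrite lee_fin kernel_q_integrand_ge0.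
  - exact: measurable_funS mf.
  - exact: measurable_funS mDg.
  - move=> z _; rewrite lee_fin kernel_integrand_le //.
    by apply: (le_trans (KCk _ _)); rewrite ler_wpM2r ?ler_norm.
apply: (le_trans (ge0_sum_integral_disjoint_le (G \x G)%E mPP dPP mDg Dg0)).
under eq_integral do rewrite EFinM.
rewrite ge0_integralZl_EFin //; last first.
- by apply/measurable_EFinP.
- by move=> z _; rewrite lee_fin kn_integrand_ge0.
by rewrite -[X in (_ * X)%E]/(kn G mu2 Kn) knk -EFinM.
Qed.

Lemma normalised_sum_partition_le [Kn : T -> T -> R] [N : nat]
    [P : nat -> set T] [g C : R] :
  measurable_fun setT (fun z : T * T => Kn z.1 z.2) ->
  finite_meas_partition N P -> 0 <= g ->
  (forall x y, ((`|Kn x y|)%:E <= C%:E * kn G mu2 Kn)%E) ->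
  (((fine (kn G mu2 Kn) `^ (q / 2))^-1 * g `^ (q / 2 - 1))%:E
     * \sum_(m < N) \int[(G \x G)%E]_(z in P m `*` P m)
         ((`|Kn z.1 z.2| `^ q) * muq z.1 * muq z.2)%:E
   <= (`|C| `^ (q - 2) * (M / c) ^+ 2
        * (g * fine (kn G mu2 Kn)) `^ (q / 2 - 1))%:E)%E.
Proof.
move=> mK PN g0 KC.
have bound0 : (0 <= (`|C| `^ (q - 2) * (M / c) ^+ 2
    * (g * fine (kn G mu2 Kn)) `^ (q / 2 - 1))%:E)%E.
  by rewrite lee_fin; exact: mulr_ge0 (mulr_ge0 (powR_ge0 _ _) (sqr_ge0 _)) (powR_ge0 _ _).
(* [k_n = 0] or [k_n = +oo]: the normalising factor is [0^-1 = 0]. *)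
have [k0|k_neq0] := eqVneq (fine (kn G mu2 Kn)) 0.
  by rewrite {1}k0 powR0 ?invr0 ?mul0r ?mul0e ?gt_eqF ?q_half_gt0.
have knk : kn G mu2 Kn = (fine (kn G mu2 Kn))%:E.
  by move: k_neq0; case: (kn G mu2 Kn) => //=; rewrite eqxx.
have k0 : 0 < fine (kn G mu2 Kn) by rewrite lt0r k_neq0 fine_ge0 ?kn_ge0.
have KCk x y : `|Kn x y| <= C * fine (kn G mu2 Kn).
  by have := KC x y; rewrite {1}knk -EFinM lee_fin.
apply: (le_trans (lee_wpmul2l _ (sum_partition_integral_le mK PN knk KCk))).
  by rewrite lee_fin mulr_ge0 ?invr_ge0 ?powR_ge0.
by rewrite -EFinM kn_normalisation_eq.
Qed.

End FixedKernel.

Theorem lemma1 (d : measure_display) (T : measurableType d) (R : realType)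
  (G : probability T R) (q : R) (mu2 muq : T -> R)
  (K : nat -> T -> T -> R) (C : R)
  (N : nat -> nat) (X : nat -> nat -> set T) :
  2 < q ->
  measurable_fun setT mu2 -> (forall x, 0 <= mu2 x) ->
  (exists c : R, 0 < c /\ forall x, c <= mu2 x) ->
  measurable_fun setT muq -> (forall x, 0 <= muq x) ->
  (exists M : R, forall x, muq x <= M) ->
  (forall n, measurable_fun setT (fun z : T * T => K n z.1 z.2)) ->
  (forall n x y, ((`|K n x y|)%:E <= C%:E * kn G mu2 (K n))%E) ->
  (forall n, finite_meas_partition (N n) (X n)) ->
  ((fun n : nat => (\big[Num.max/0]_(m < N n) fine (G (X n m)))%:E
        * kn G mu2 (K n) * (n%:R^-1)%:E)%E @ \oo --> 0%E) ->
  ((fun n : nat =>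
      ((fine (kn G mu2 (K n)) `^ (q / 2))^-1
        * ((\big[Num.max/0]_(m < N n) fine (G (X n m))) / n%:R) `^ (q / 2 - 1))%:E
      * \sum_(m < N n)
          \int[(G \x G)%E]_(z in X n m `*` X n m)
             ((`|K n z.1 z.2| `^ q) * muq z.1 * muq z.2)%:E)%E
     @ \oo --> 0%E).
Proof.
move=> q2 mmu2 mu20 [c [c0 cmu2]] mmuq muq0 [M muqM] mK KC XP hyp.
pose g n := (\big[Num.max/0]_(m < N n) fine (G (X n m))) / n%:R.
have g0 n : 0 <= g n by rewrite divr_ge0 ?bigmax_ge_id.
pose w n := g n * fine (kn G mu2 (K n)).
have kn0 n : (0 <= kn G mu2 (K n))%E := kn_ge0 mu20 (K n).
have w0 n : 0 <= w n by rewrite mulr_ge0 ?fine_ge0.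
have w_cvg0 : w @ \oo --> 0.
  have /fine_cvgP[_ //] : (fun n => (w n)%:E) @ \oo --> 0%E.
  apply: (squeeze_cvge _ (cvg_cst 0%E) hyp); apply: nearW => n.
  by rewrite lee_fin w0 /= muleAC -EFinM EFin_mul_fine_le.
set B := `|C| `^ (q - 2) * (M / c) ^+ 2.
have bound_cvg0 : (fun n => (B * w n `^ (q / 2 - 1))%:E) @ \oo --> 0%E.
  apply: cvg_EFin; first exact: nearW.
  by rewrite -(mulr0 B); apply: cvgM; [exact: cvg_cst|apply: powR_cvg0_seq => //; lra].
apply: (squeeze_cvge _ (cvg_cst 0%E) bound_cvg0); apply: nearW => n.
rewrite (normalised_sum_partition_le q2 c0 mmu2 mu20 cmu2 mmuq muq0 muqM
  (mK n) (XP n) (g0 n) (KC n)) andbT.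
rewrite mule_ge0 ?lee_fin ?mulr_ge0 ?invr_ge0 ?powR_ge0 ?sume_ge0 //.
by move=> m _; apply: integral_ge0 => z _; rewrite lee_fin (kernel_q_integrand_ge0 muq0).
Qed.
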